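(* Let $G$ be a $d$-regular graph ($d>1$) that has a good signing. Then the lexicographic product $G\circ\overline{K_4}$ has a good signing, i.e. there is an edge-signing $\sigma'$ of $G\circ\overline{K_4}$ such that every eigenvalue of its signed adjacency matrix has absolute value at most $2\sqrt{4d-1}$.
   Context: For an edge-signing $\sigma: E(H)\to\{-1,1\}$ of a graph $H$, the signed adjacency matrix $A^{\sigma}$ has $(i,j)$ entry $\sigma(ij)$ if $ij\in E(H)$ and $0$ otherwise. A good signing of a $D$-regular graph is a signing all of whose signed adjacency eigenvalues have absolute value at most $2\sqrt{D-1}$; $G\circ\overline{K_4}$ is $4d$-regular. $\overline{K_4}$ is the edgeless graph on four vertices. The lexicographic product $G\circ H$ has vertex set $V(G)\times V(H)$, with $(x,y)$ adjacent to $(z,t)$ iff $xz\in E(G)$, or $x=z$ and $yt\in E(H)$. *)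

From mathcomp Require Import all_boot all_order all_algebra all_field.
Set Implicit Arguments. Unset Strict Implicit. Unset Printing Implicit Defensive.
Import Order.TTheory GRing.Theory Num.Theory.
Local Open Scope ring_scope.

Definition simple_graph (V : finType) (adj : rel V) : Prop :=
  (forall x y, adj x y = adj y x) /\ (forall x, ~~ adj x x).

Definition regular (V : finType) (adj : rel V) (D : nat) : Prop :=
  forall x, #|[set y | adj x y]| = D.

(* An edge-signing: a sign attached to each (unordered) edge; represented as
   a symmetric function on pairs, whose values on edges are +1 or -1
   (values off edges are irrelevant). *)
Definition signing (V : finType) (adj : rel V) (s : V -> V -> bool) : Prop :=
  forall x y, adj x y -> s x y = s y x.

Definition signed_adj (V : finType) (adj : rel V) (s : V -> V -> bool)
  : 'M[algC]_#|V| :=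
  \matrix_(i, j) (if adj (enum_val i) (enum_val j)
                  then (-1) ^+ s (enum_val i) (enum_val j) else 0).

Definition good_signing (V : finType) (adj : rel V) (D : nat)
  (s : V -> V -> bool) : Prop :=
  signing adj s /\
  forall lam : algC, eigenvalue (signed_adj adj s) lam ->
    `|lam| <= 2 * sqrtC (D%:R - 1).

Definition has_good_signing (V : finType) (adj : rel V) (D : nat) : Prop :=
  exists s, good_signing adj D s.

Definition lex_adj (V W : finType) (adjG : rel V) (adjH : rel W) : rel (V * W) :=
  fun p q => adjG p.1 q.1 || ((p.1 == q.1) && adjH p.2 q.2).

Definition K4bar_adj : rel 'I_4 := fun _ _ => false.

(* The signing of G o K4bar multiplies the sign of a lifted edge of G by the
   corresponding entry of the 4 x 4 Sylvester-Hadamard matrix H, so the signed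
   adjacency matrix is A (x) H.  As H^2 = 4 I, its square is 4 A^2 (x) I, hence
   every eigenvalue lam of A (x) H gives the eigenvalue lam^2 / 4 of A^2, and
   then lam / 2 or -lam / 2 is an eigenvalue of A.  Thus
   |lam| <= 2 * 2 sqrt(d - 1) = 2 sqrt(4d - 4) <= 2 sqrt(4d - 1). *)
From mathcomp Require Import all_boot all_order all_algebra all_field.
From mathcomp Require Import ring.
Set Implicit Arguments. Unset Strict Implicit. Unset Printing Implicit Defensive.
Import Order.TTheory GRing.Theory Num.Theory.
Local Open Scope ring_scope.

(* Square matrices indexed by a finType V, as kernels V -> V -> R acting on
   row vectors V -> R. *)
Section Kernels.
Variable R : fieldType.
Implicit Types (V W : finType).

Definition kmx V (K : V -> V -> R) : 'M[R]_#|V| :=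
  \matrix_(i, j) K (enum_val i) (enum_val j).

Definition kact V (f : V -> R) (K : V -> V -> R) (z : V) : R :=
  \sum_x f x * K x z.

Definition kmul V (K L : V -> V -> R) (x z : V) : R := \sum_y K x y * L y z.

Definition ktens V W (K : V -> V -> R) (L : W -> W -> R) (p q : V * W) : R :=
  K p.1 q.1 * L p.2 q.2.

Definition left_eigenvector V (K : V -> V -> R) (lam : R) (f : V -> R) : Prop :=
  (exists x, f x != 0) /\ forall z, kact f K z = lam * f z.

Lemma eq_kmx V (K L : V -> V -> R) : K =2 L -> kmx K = kmx L.
Proof. by move=> KL; apply/matrixP => i j; rewrite !mxE KL. Qed.

Lemma sum_enum_rank V (g : 'I_#|V| -> R) :
  \sum_i g i = \sum_(x : V) g (enum_rank x).
Proof. by rewrite (reindex enum_rank) //; apply/onW_bij/enum_rank_bij. Qed.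

Lemma eigenvalue_kmxP V (K : V -> V -> R) lam :
  eigenvalue (kmx K) lam <-> exists f, left_eigenvector K lam f.
Proof.
split.
  case/eigenvalueP=> v v_eig v_neq0.
  exists (fun x => v 0 (enum_rank x)); split.
    apply/existsP; apply: contraR v_neq0 => /existsPn v0.
    apply/eqP/rowP => i; rewrite mxE; apply/eqP.
    by have := v0 (enum_val i); rewrite enum_valK negbK.
  move=> z; move/rowP: v_eig => /(_ (enum_rank z)); rewrite !mxE => <-.
  by rewrite sum_enum_rank; apply: eq_bigr => x _; rewrite mxE !enum_rankK.
case=> f [[x0 fx0_neq0] f_eig]; apply/eigenvalueP.
exists (\row_i f (enum_val i)).
  apply/rowP => j; rewrite !mxE sum_enum_rank -f_eig.
  by apply: eq_bigr => x _; rewrite !mxE !enum_rankK.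
apply/eqP => /rowP /(_ (enum_rank x0)); rewrite !mxE enum_rankK => /eqP.
by rewrite (negbTE fx0_neq0).
Qed.

Lemma eq_kact V (f g : V -> R) (K : V -> V -> R) z :
  f =1 g -> kact f K z = kact g K z.
Proof. by move=> fg; apply: eq_bigr => x _; rewrite fg. Qed.

Lemma kactZ V (a : R) (f : V -> R) (K : V -> V -> R) z :
  kact (fun x => a * f x) K z = a * kact f K z.
Proof. by rewrite /kact mulr_sumr; apply: eq_bigr => x _; rewrite mulrA. Qed.

Lemma kactB V (f g : V -> R) (K : V -> V -> R) z :
  kact (fun x => f x - g x) K z = kact f K z - kact g K z.
Proof. by rewrite /kact -sumrB; apply: eq_bigr => x _; rewrite mulrBl. Qed.

Lemma kact_kmul V (f : V -> R) (K L : V -> V -> R) z :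
  kact f (kmul K L) z = kact (kact f K) L z.
Proof.
rewrite /kact /kmul; under eq_bigr do rewrite mulr_sumr.
rewrite exchange_big; apply: eq_bigr => y _; rewrite mulr_suml.
by apply: eq_bigr => x _; rewrite mulrA.
Qed.

Lemma left_eigenvector_kmul V (K : V -> V -> R) lam f :
  left_eigenvector K lam f -> left_eigenvector (kmul K K) (lam ^+ 2) f.
Proof.
case=> f_neq0 f_eig; split=> // z.
by rewrite kact_kmul (eq_kact _ _ f_eig) kactZ f_eig mulrA -expr2.
Qed.

Lemma kmul_ktens V W (K K' : V -> V -> R) (L L' : W -> W -> R) p q :
  kmul (ktens K L) (ktens K' L') p q = ktens (kmul K K') (kmul L L') p q.
Proof.
rewrite /kmul /ktens big_distrlr pair_big /=.
by apply: eq_bigr => -[y t] _; rewrite mulrACA.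
Qed.

Lemma kact_pair V W (f : V * W -> R) (K : V * W -> V * W -> R) q :
  kact f K q = \sum_x \sum_i f (x, i) * K (x, i) q.
Proof. by rewrite /kact pair_bigA; apply: eq_bigr => -[x i]. Qed.

Lemma kact_ktens_scalar V W (f : V * W -> R) (K : V -> V -> R) (c : R) z k :
  kact f (ktens K (fun i j => (i == j)%:R * c)) (z, k)
  = c * kact (fun x => f (x, k)) K z.
Proof.
rewrite kact_pair /kact /ktens mulr_sumr; apply: eq_bigr => x _ /=.
rewrite (bigD1 k) //= big1 => [|i /negbTE ->]; last by rewrite !mul0r !mulr0.
by rewrite eqxx addr0 mul1r mulrA mulrC.
Qed.

(* If L^2 = c I, then (K (x) L)^2 = c K^2 (x) I, so every slice of an
   eigenvector of K (x) L is an eigenvector of K^2 (when nonzero). *)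
Lemma eigenvalue_kmx_ktens V W (K : V -> V -> R) (L : W -> W -> R) c lam :
  c != 0 -> (forall i j, kmul L L i j = (i == j)%:R * c) ->
  eigenvalue (kmx (ktens K L)) lam -> eigenvalue (kmx (kmul K K)) (lam ^+ 2 / c).
Proof.
move=> c_neq0 L_sq /eigenvalue_kmxP [f /left_eigenvector_kmul [[[x0 k0] f_neq0] f_eig]].
apply/eigenvalue_kmxP; exists (fun x => f (x, k0)); split; first by exists x0.
move=> z; apply: (mulfI c_neq0); rewrite -kact_ktens_scalar.
transitivity (kact f (kmul (ktens K L) (ktens K L)) (z, k0)).
  by apply: eq_bigr => p _; rewrite kmul_ktens /ktens L_sq.
by rewrite f_eig mulrA mulrCA divff // mulr1.
Qed.

Lemma eigenvalue_kmx_sqrt V (K : V -> V -> R) r :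
  eigenvalue (kmx (kmul K K)) (r ^+ 2) ->
  eigenvalue (kmx K) r \/ eigenvalue (kmx K) (- r).
Proof.
case/eigenvalue_kmxP=> w [w_neq0 w_eig].
pose u y := kact w K y - r * w y.
have u_eig z : kact u K z = - r * u z.
  by rewrite /u kactB kactZ -kact_kmul w_eig; ring.
have [/existsP [y uy_neq0]|/existsPn u0] := boolP [exists y, u y != 0].
  by right; apply/eigenvalue_kmxP; exists u; split; first exists y.
left; apply/eigenvalue_kmxP; exists w; split=> // z.
by apply/eqP; rewrite -subr_eq0; apply/negPn/u0.
Qed.

End Kernels.

Definition signed_kernel (V : finType) (adj : rel V) (s : V -> V -> bool)
  (x z : V) : algC :=
  if adj x z then (-1) ^+ s x z else 0.

Lemma signed_adjE (V : finType) (adj : rel V) s :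
  signed_adj adj s = kmx (signed_kernel adj s).
Proof. by []. Qed.

Definition lex_sign (V W : finType) (s : V -> V -> bool) (t : W -> W -> bool)
  (p q : V * W) : bool :=
  s p.1 q.1 (+) t p.2 q.2.

Lemma lex_sign_signing (V W : finType) (adjG : rel V) (adjH : rel W) s t :
  signing adjG s -> (forall y y', t y y' = t y' y) ->
  signing (lex_adj adjG adjH) (lex_sign s t).
Proof.
move=> s_sym t_sym p q /orP [/s_sym sE | /andP [/eqP pq1 _]].
  by rewrite /lex_sign sE t_sym.
by rewrite /lex_sign pq1 t_sym.
Qed.

Lemma signed_kernel_lex_edgeless (V W : finType) (adj : rel V) (adjH : rel W) s t :
  (forall y y', adjH y y' = false) ->
  signed_kernel (lex_adj adj adjH) (lex_sign s t)
  =2 ktens (signed_kernel adj s) (fun i j => (-1) ^+ t i j).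
Proof.
move=> adjH0 p q; rewrite /signed_kernel /lex_adj /ktens adjH0 andbF orbF.
by case: (adj _ _); rewrite ?mul0r // signr_addb.
Qed.

(* The Sylvester-Hadamard matrix H2 (x) H2: writing i = 2a + b, the entry
   (i, j) has sign (-1)^(a_i a_j + b_i b_j). *)
Definition hadamard4_sign (i j : 'I_4) : bool :=
  (odd i && odd j) (+) ((1 < i)%N && (1 < j)%N).

Definition hadamard4 (R : ringType) (i j : 'I_4) : R := (-1) ^+ hadamard4_sign i j.

Lemma hadamard4_signC i j : hadamard4_sign i j = hadamard4_sign j i.
Proof. by rewrite /hadamard4_sign andbC [(1 < j)%N && _]andbC. Qed.

Lemma kmul_hadamard4 (R : fieldType) (i j : 'I_4) :
  kmul (@hadamard4 R) (@hadamard4 R) i j = (i == j)%:R * 4.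
Proof.
rewrite /kmul /hadamard4 !big_ord_recl big_ord0.
case: i => -[|[|[|[|i]]]] ? //; case: j => -[|[|[|[|j]]]] ? //=.
all: ring.
Qed.

Lemma ramanujan_bound_mul4 (d : nat) : (0 < d)%N ->
  2 * (2 * sqrtC (d%:R - 1)) <= 2 * sqrtC ((4 * d)%:R - 1) :> algC.
Proof.
move=> d_gt0; have d1_ge0 : 0 <= d%:R - 1 :> algC by rewrite subr_ge0 ler1n.
rewrite ler_wpM2l // -[2 in X in X <= _]sqrCK ?ler0n // -sqrtCM ?nnegrE ?exprn_ge0 //.
rewrite ler_sqrtC ?nnegrE ?mulr_ge0 ?exprn_ge0 //; last first.
  by rewrite subr_ge0 ler1n muln_gt0.
by rewrite natrM mulrBr -natrX mulr1 lerD2l lerN2 ler1n.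
Qed.

Local Close Scope ring_scope.
Unset Implicit Arguments.

Theorem mainTheorem4 (V : finType) (adj : rel V) (d : nat) :
  simple_graph adj -> (1 < d)%N -> regular adj d ->
  has_good_signing adj d ->
  has_good_signing (lex_adj adj K4bar_adj) (4 * d).
Proof.
move=> _ d_gt1 _ [s [s_sym s_good]].
exists (lex_sign s hadamard4_sign); split.
  exact: lex_sign_signing hadamard4_signC.
move=> lam; rewrite signed_adjE (eq_kmx (signed_kernel_lex_edgeless _ _ _ _)) //.
have four_neq0 : (4 != 0 :> algC)%R by rewrite pnatr_eq0.
have half_sqr : ((lam / 2) ^+ 2 = lam ^+ 2 / 4 :> algC)%R by rewrite expr_div_n -natrX.
move=> /(eigenvalue_kmx_ktens four_neq0 (kmul_hadamard4 _)).
rewrite -half_sqr => /eigenvalue_kmx_sqrt half_eig.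
have half_le : (`|lam / 2| <= 2 * sqrtC (d%:R - 1))%R.
  by case: half_eig => /s_good; rewrite ?normrN.
apply: le_trans (ramanujan_bound_mul4 (ltnW d_gt1)).
have two_neq0 : (2 != 0 :> algC)%R by rewrite pnatr_eq0.
by rewrite -(divfK two_neq0 lam) normrM normr_nat mulrC ler_wpM2l.
Qed.
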